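(* Let $\mathcal{X}$ and $\mathcal{Y}$ be finite sets, let $\Pr$ be a probability distribution on $\mathcal{X}$, let $\delta:\mathcal{X}\times\mathcal{Y}\to\mathbb{R}$, and let $\bar\pi,\pi_1,\dots,\pi_m$ be stochastic policies, each $\pi_i$ having support for $\bar\pi$. Let $\mathcal{D}=\bigcup_{i=1}^m\mathcal{D}^i$ be a log dataset in which, for each $i$, $\mathcal{D}^i$ consists of $n_i$ samples $(x^i_j,y^i_j,\delta^i_j,p^i_j)$, $j=1,\dots,n_i$, with $x^i_j\sim\Pr$, $y^i_j\sim\pi_i(\cdot\mid x^i_j)$, $\delta^i_j=\delta(x^i_j,y^i_j)$, $p^i_j=\pi_i(y^i_j\mid x^i_j)$, all draws independent; let $n=\sum_in_i$ and $\pi_{avg}(y\mid x)=\frac1n\sum_in_i\pi_i(y\mid x)$. Define $$\hat U_{naive}(\bar\pi)=\frac1n\sum_{i=1}^m\sum_{j=1}^{n_i}\delta^i_j\frac{\bar\pi(y^i_j\mid x^i_j)}{p^i_j},\qquad \hat U_{bal}(\bar\pi)=\frac1n\sum_{i=1}^m\sum_{j=1}^{n_i}\delta^i_j\frac{\bar\pi(y^i_j\mid x^i_j)}{\pi_{avg}(y^i_j\mid x^i_j)}.$$ Then $\mathrm{Var}_{\mathcal{D}}[\hat U_{bal}(\bar\pi)]\le\mathrm{Var}_{\mathcal{D}}[\hat U_{naive}(\bar\pi)]$.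
   Context: A stochastic policy $\pi$ assigns to each $x\in\mathcal{X}$ a probability distribution $\pi(\cdot\mid x)$ on $\mathcal{Y}$. A policy $\pi$ has support for a policy $\pi'$ if for all $x\in\mathcal{X},y\in\mathcal{Y}$, $\delta(x,y)\pi'(y\mid x)\neq0$ implies $\pi(y\mid x)>0$. Variances are taken over the random draw of $\mathcal{D}$. *)

From HB Require Import structures.
From mathcomp Require Import all_boot all_order all_algebra.
Set Implicit Arguments. Unset Strict Implicit. Unset Printing Implicit Defensive.
Import Order.TTheory GRing.Theory Num.Theory.
Local Open Scope ring_scope.

Section LogData.
Variables (R : realFieldType) (X Y : finType).

Definition is_distribution (Pr : X -> R) : Prop :=
  (forall x, 0 <= Pr x) /\ \sum_(x : X) Pr x = 1.

(* a stochastic policy: pi x y = pi(y | x) *)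
Definition is_policy (pi : X -> Y -> R) : Prop :=
  (forall x y, 0 <= pi x y) /\ (forall x, \sum_(y : Y) pi x y = 1).

Definition has_support (delta : X -> Y -> R) (pi pi' : X -> Y -> R) : Prop :=
  forall x y, delta x y * pi' x y != 0 -> 0 < pi x y.

Variables (m : nat) (ns : 'I_m -> nat).

Definition sample_idx : finType := {i : 'I_m & 'I_(ns i)}.

(* a log dataset: the (x, y) pair of each sample; delta^i_j and p^i_j are
   determined by (x, y) and are computed from it *)
Definition dataset : finType := {ffun sample_idx -> (X * Y)%type}.

Definition sample (D : dataset) (i : 'I_m) (j : 'I_(ns i)) : X * Y :=
  D (existT (fun i => 'I_(ns i)) i j).

(* probability of a dataset: all draws independent, x ~ Pr, y ~ pi_i(.|x) *)
Definition dataset_prob (Pr : X -> R) (pis : 'I_m -> X -> Y -> R)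
    (D : dataset) : R :=
  \prod_(k : sample_idx) (Pr (D k).1 * pis (tag k) (D k).1 (D k).2).

Definition Exp (Pr : X -> R) (pis : 'I_m -> X -> Y -> R) (f : dataset -> R) : R :=
  \sum_(D : dataset) dataset_prob Pr pis D * f D.

Definition Var (Pr : X -> R) (pis : 'I_m -> X -> Y -> R) (f : dataset -> R) : R :=
  Exp Pr pis (fun D => (f D - Exp Pr pis f) ^+ 2).

Definition ntot : nat := (\sum_(i < m) ns i)%N.

Definition pi_avg (pis : 'I_m -> X -> Y -> R) (x : X) (y : Y) : R :=
  (ntot%:R)^-1 * \sum_(i < m) (ns i)%:R * pis i x y.

Definition U_naive (delta : X -> Y -> R) (pis : 'I_m -> X -> Y -> R)
    (pibar : X -> Y -> R) (D : dataset) : R :=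
  (ntot%:R)^-1 * \sum_(i < m) \sum_(j < ns i)
     let xy := sample D j in
     delta xy.1 xy.2 * (pibar xy.1 xy.2 / pis i xy.1 xy.2).

Definition U_bal (delta : X -> Y -> R) (pis : 'I_m -> X -> Y -> R)
    (pibar : X -> Y -> R) (D : dataset) : R :=
  (ntot%:R)^-1 * \sum_(i < m) \sum_(j < ns i)
     let xy := sample D j in
     delta xy.1 xy.2 * (pibar xy.1 xy.2 / pi_avg pis xy.1 xy.2).

End LogData.

From mathcomp Require Import all_boot all_order all_algebra.
From mathcomp Require Import ring.
Set Implicit Arguments. Unset Strict Implicit. Unset Printing Implicit Defensive.
Import Order.TTheory GRing.Theory Num.Theory.
Local Open Scope ring_scope.

(* Both estimators are (1/n) times a sum of functions of independent samples,
   so their variances are (1/n^2) times the sum of the per-sample variances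
   E[g^2] - (E g)^2.  Each naive term has mean U, the true utility, while the
   means of the balanced terms only sum to n U; by the quadratic-mean
   inequality the squared means of the balanced terms are thus at least as
   large in total.  For the second moments, at each point (x, y) the balanced
   term delta pibar / pi_avg is the pi_i-weighted mean of the naive terms
   delta pibar / pi_i, so by Jensen's inequality its weighted square is
   dominated by theirs. *)

Lemma weighted_mean_sqr_le (R : realFieldType) (I : finType) (w v : I -> R) (u : R) :
  (forall i, 0 <= w i) -> \sum_i w i * v i = (\sum_i w i) * u ->
  (\sum_i w i) * u ^+ 2 <= \sum_i w i * v i ^+ 2.
Proof.
move=> w_ge0 mean_u.
have spread_ge0 : 0 <= \sum_i w i * (v i - u) ^+ 2.
  by apply: sumr_ge0 => i _; rewrite mulr_ge0 ?sqr_ge0.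
have spreadE : \sum_i w i * (v i - u) ^+ 2 =
    \sum_i w i * v i ^+ 2 - (\sum_i w i) * u ^+ 2.
  transitivity (\sum_i (w i * v i ^+ 2 - (2 * u) * (w i * v i) + u ^+ 2 * w i)).
    by apply: eq_bigr => i _; ring.
  by rewrite big_split sumrB /= -!mulr_sumr mean_u; ring.
by rewrite -subr_ge0 -spreadE.
Qed.

Section IndependentSamples.
Variables (R : realFieldType) (X Y : finType) (m : nat) (ns : 'I_m -> nat).
Variables (Pr : X -> R) (pis : 'I_m -> X -> Y -> R).
Local Notation K := (sample_idx ns).
Local Notation E := (Exp (ns := ns) Pr pis).

Definition sample_prob (k : K) (t : X * Y) : R := Pr t.1 * pis (tag k) t.1 t.2.

Definition Esample (k : K) (g : X * Y -> R) : R := \sum_t sample_prob k t * g t.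

Definition Vsample (k : K) (g : X * Y -> R) : R :=
  Esample k (fun t => (g t - Esample k g) ^+ 2).

Lemma eq_Exp f1 f2 : f1 =1 f2 -> E f1 = E f2.
Proof. by move=> eq_f; apply: eq_bigr => D _; rewrite eq_f. Qed.

Lemma eq_Var f1 f2 :
  f1 =1 f2 -> Var (ns := ns) Pr pis f1 = Var (ns := ns) Pr pis f2.
Proof.
by move=> eq_f; rewrite /Var (eq_Exp eq_f); apply: eq_Exp => D; rewrite eq_f.
Qed.

Lemma Exp_sumr (I : finType) (F : I -> dataset X Y ns -> R) :
  E (fun D => \sum_i F i D) = \sum_i E (F i).
Proof. by rewrite /Exp exchange_big; apply: eq_bigr => D _; rewrite mulr_sumr. Qed.

Lemma Exp_mulr c f : E (fun D => c * f D) = c * E f.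
Proof. by rewrite /Exp mulr_sumr; apply: eq_bigr => D _; rewrite mulrCA. Qed.

Lemma Exp_prod (h : K -> X * Y -> R) :
  E (fun D => \prod_k h k (D k)) = \prod_k Esample k (h k).
Proof.
rewrite /Exp /dataset_prob /Esample bigA_distr_bigA; apply: eq_bigr => D _.
by rewrite -big_split.
Qed.

Lemma eq_Esample k f g : f =1 g -> Esample k f = Esample k g.
Proof. by move=> eq_fg; apply: eq_bigr => t _; rewrite eq_fg. Qed.

Lemma EsampleD k f g :
  Esample k (fun t => f t + g t) = Esample k f + Esample k g.
Proof. by rewrite /Esample -big_split; apply: eq_bigr => t _; rewrite mulrDr. Qed.

Lemma EsampleZ k c f : Esample k (fun t => c * f t) = c * Esample k f.
Proof. by rewrite /Esample mulr_sumr; apply: eq_bigr => t _; rewrite mulrCA. Qed.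

Hypothesis Pr_distr : is_distribution Pr.
Hypothesis pis_policy : forall i, is_policy (pis i).

Lemma Esample_cst k c : Esample k (fun _ => c) = c.
Proof.
rewrite /Esample -mulr_suml /sample_prob.
rewrite -(pair_bigA _ (fun x y => Pr x * pis (tag k) x y)) /=.
have [_ sum_Pr] := Pr_distr; rewrite -[RHS]mul1r -[in RHS]sum_Pr; congr (_ * _).
apply: eq_bigr => x _; rewrite -mulr_sumr.
by case: (pis_policy (tag k)) => _ ->; rewrite mulr1.
Qed.

Lemma Exp_prod_in (A : {set K}) (h : K -> X * Y -> R) :
  E (fun D => \prod_(k in A) h k (D k)) = \prod_(k in A) Esample k (h k).
Proof.
pose hA k := if k \in A then h k else fun _ => 1.
rewrite big_mkcond (eq_Exp (f2 := fun D => \prod_k hA k (D k))); last first.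
  by move=> D; rewrite big_mkcond; apply: eq_bigr => k _; rewrite /hA; case: ifP.
by rewrite Exp_prod; apply: eq_bigr => k _; rewrite /hA; case: ifP; rewrite ?Esample_cst.
Qed.

Lemma Exp_coord k g : E (fun D => g (D k)) = Esample k g.
Proof.
rewrite (eq_Exp (f2 := fun D => \prod_(j in [set k]) g (D j))) => [|D].
  by rewrite (Exp_prod_in _ (fun _ => g)) big_set1.
by rewrite big_set1.
Qed.

Lemma Exp_coord_mul k l f g : k != l ->
  E (fun D => f (D k) * g (D l)) = Esample k f * Esample l g.
Proof.
move=> neq_kl; pose h j := if j == k then f else g.
have prod_h (F : K -> R) : \prod_(j in [set k; l]) F j = F k * F l.
  by rewrite big_setU1 ?inE // big_set1.
rewrite (eq_Exp (f2 := fun D => \prod_(j in [set k; l]) h j (D j))) => [|D].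
  by rewrite (Exp_prod_in _ h) prod_h /h eqxx eq_sym (negPf neq_kl).
by rewrite prod_h /h eqxx eq_sym (negPf neq_kl).
Qed.

Lemma VsampleE k g :
  Vsample k g = Esample k (fun t => g t ^+ 2) - Esample k g ^+ 2.
Proof.
rewrite /Vsample; set mu := Esample k g.
have -> : Esample k (fun t => (g t - mu) ^+ 2) =
    Esample k (fun t => g t ^+ 2 + (- (2 * mu) * g t + mu ^+ 2)).
  by apply: eq_Esample => t; ring.
by rewrite !EsampleD EsampleZ Esample_cst -/mu; ring.
Qed.

Lemma Var_sum_coord c (g : K -> X * Y -> R) :
  Var (ns := ns) Pr pis (fun D => c * \sum_k g k (D k)) =
  c ^+ 2 * \sum_k Vsample k (g k).
Proof.
pose gc k t := g k t - Esample k (g k).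
have Egc k : Esample k (gc k) = 0.
  by rewrite /gc (EsampleD k _ (fun _ => _)) Esample_cst subrr.
have mean : E (fun D => c * \sum_k g k (D k)) = c * \sum_k Esample k (g k).
  by rewrite Exp_mulr Exp_sumr; under eq_bigr do rewrite Exp_coord.
rewrite /Var mean.
rewrite (eq_Exp (f2 := fun D => c ^+ 2 * \sum_k \sum_l gc k (D k) * gc l (D l))).
  rewrite Exp_mulr Exp_sumr; congr (_ * _); apply: eq_bigr => k _.
  rewrite Exp_sumr (bigD1 k) //= big1 ?addr0 => [|l neq_lk].
    rewrite (Exp_coord k (fun t => gc k t * gc k t)).
    by apply: eq_bigr => t _; rewrite expr2.
  (* cross terms factor by independence into means of centred terms *)
  by rewrite Exp_coord_mul 1?eq_sym // Egc mul0r.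
move=> D; rewrite -mulrBr -sumrB exprMn; congr (_ * _).
by rewrite expr2 mulr_suml; apply: eq_bigr => k _; rewrite mulr_sumr.
Qed.

End IndependentSamples.

Section Estimators.
Variables (R : realFieldType) (X Y : finType) (m : nat) (ns : 'I_m -> nat).
Variables (Pr : X -> R) (pis : 'I_m -> X -> Y -> R) (delta pibar : X -> Y -> R).
Hypothesis Pr_distr : is_distribution Pr.
Hypothesis pis_policy : forall i, is_policy (pis i).
Hypothesis pis_support : forall i, has_support delta (pis i) pibar.
Local Notation K := (sample_idx ns).
Local Notation N := (#|K|%:R : R).

Definition pi_sum (t : X * Y) : R := \sum_(k : K) pis (tag k) t.1 t.2.

Definition delta_pibar (t : X * Y) : R := delta t.1 t.2 * pibar t.1 t.2.

Definition utility : R := \sum_t Pr t.1 * delta_pibar t.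

Definition naive_term (k : K) (t : X * Y) : R :=
  delta t.1 t.2 * (pibar t.1 t.2 / pis (tag k) t.1 t.2).

Definition bal_term (t : X * Y) : R :=
  delta t.1 t.2 * (pibar t.1 t.2 / pi_avg ns pis t.1 t.2).

Lemma sum_sample_idx (F : forall i : 'I_m, 'I_(ns i) -> R) :
  \sum_(i < m) \sum_(j < ns i) F i j = \sum_(k : K) F (tag k) (tagged k).
Proof. exact: (sig_big_dep (fun _ => true) (fun _ _ => true)). Qed.

Lemma ntotE : (ntot ns)%:R = N.
Proof.
rewrite /ntot natr_sum -sumr_const -(sum_sample_idx (fun _ _ => 1)).
by apply: eq_bigr => i _; rewrite sumr_const card_ord.
Qed.

Lemma pi_avgE x y : pi_avg ns pis x y = N^-1 * pi_sum (x, y).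
Proof.
rewrite /pi_avg ntotE; congr (_ * _).
transitivity (\sum_(i < m) \sum_(j < ns i) pis i x y); last exact: sum_sample_idx.
by apply: eq_bigr => i _; rewrite sumr_const card_ord mulr_natl.
Qed.

Lemma U_naiveE (D : dataset X Y ns) :
  U_naive delta pis pibar D = N^-1 * \sum_k naive_term k (D k).
Proof.
rewrite /U_naive ntotE (sum_sample_idx (fun i j => naive_term (Tagged _ j) (sample D j))).
by congr (_ * _); apply: eq_bigr => -[i j].
Qed.

Lemma U_balE (D : dataset X Y ns) :
  U_bal delta pis pibar D = N^-1 * \sum_k bal_term (D k).
Proof.
rewrite /U_bal ntotE (sum_sample_idx (fun i j => bal_term (sample D j))).
by congr (_ * _); apply: eq_bigr => -[i j].
Qed.

Lemma pis_mul_naive_term k t :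
  pis (tag k) t.1 t.2 * naive_term k t = delta_pibar t.
Proof.
rewrite /naive_term (mulrA (delta _ _)) -/(delta_pibar t).
have [->|/pis_support pis_gt0] := eqVneq (delta_pibar t) 0; first by rewrite mul0r mulr0.
by rewrite mulrCA divff ?mulr1 ?lt0r_neq0.
Qed.

Lemma sum_pis_mul_naive_term t :
  \sum_k pis (tag k) t.1 t.2 * naive_term k t = N * delta_pibar t.
Proof.
by under eq_bigr do rewrite pis_mul_naive_term; rewrite sumr_const mulr_natl.
Qed.

Lemma pi_sum_mul_bal_term t : pi_sum t * bal_term t = N * delta_pibar t.
Proof.
have pis_ge0 (k : K) : 0 <= pis (tag k) t.1 t.2 by case: (pis_policy (tag k)).
have [S0|S_neq0] := eqVneq (pi_sum t) 0.
  rewrite S0 mul0r -sum_pis_mul_naive_term big1 // => k _.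
  by rewrite (psumr_eq0P (fun k _ => pis_ge0 k) S0) ?mul0r.
have [k /andP[_ pis_gt0]] := psumr_neq0P (fun k _ => pis_ge0 k) (elimN eqP S_neq0).
have N_neq0 : N != 0 by rewrite pnatr_eq0 -lt0n; apply/card_gt0P; exists k.
rewrite /bal_term pi_avgE -surjective_pairing (mulrA (delta _ _)) -/(delta_pibar t).
by field; apply/andP.
Qed.

Lemma Esample_naive_term (k : K) : Esample Pr pis k (naive_term k) = utility.
Proof. by apply: eq_bigr => t _; rewrite /sample_prob -mulrA pis_mul_naive_term. Qed.

Lemma sum_Esample_bal_term : \sum_(k : K) Esample Pr pis k bal_term = N * utility.
Proof.
rewrite /Esample exchange_big /utility mulr_sumr; apply: eq_bigr => t _.
rewrite /sample_prob; under eq_bigr do rewrite -mulrA.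
by rewrite -mulr_sumr -mulr_suml -/(pi_sum t) pi_sum_mul_bal_term mulrCA.
Qed.

Lemma card_utility_sqr_le :
  N * utility ^+ 2 <= \sum_(k : K) Esample Pr pis k bal_term ^+ 2.
Proof.
have sum1 : \sum_(k : K) (1 : R) = N by rewrite sumr_const.
have one_mul (F : K -> R) : \sum_k F k = \sum_k 1 * F k.
  by apply: eq_bigr => k _; rewrite mul1r.
rewrite -sum1 (one_mul (fun k => Esample Pr pis k bal_term ^+ 2)).
apply: weighted_mean_sqr_le => //.
by rewrite -one_mul sum1 sum_Esample_bal_term.
Qed.

Lemma second_moment_bal_le t :
  \sum_(k : K) sample_prob Pr pis k t * bal_term t ^+ 2 <=
  \sum_(k : K) sample_prob Pr pis k t * naive_term k t ^+ 2.
Proof.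
have Pr_ge0 : 0 <= Pr t.1 by case: Pr_distr.
rewrite /sample_prob; under eq_bigr do rewrite -mulrA.
under [X in _ <= X]eq_bigr do rewrite -mulrA.
rewrite -!mulr_sumr ler_wpM2l // -[X in X <= _]mulr_suml -/(pi_sum t).
apply: weighted_mean_sqr_le => [k|]; first by case: (pis_policy (tag k)).
by rewrite sum_pis_mul_naive_term pi_sum_mul_bal_term.
Qed.

Lemma sum_second_moment_bal_le :
  \sum_(k : K) Esample Pr pis k (fun t => bal_term t ^+ 2) <=
  \sum_(k : K) Esample Pr pis k (fun t => naive_term k t ^+ 2).
Proof.
rewrite /Esample exchange_big [X in _ <= X]exchange_big /=.
by apply: ler_sum => t _; apply: second_moment_bal_le.
Qed.

End Estimators.

Theorem theorem5p3 (R : realFieldType) (X Y : finType)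
  (Pr : X -> R) (delta : X -> Y -> R) (pibar : X -> Y -> R)
  (m : nat) (pis : 'I_m -> X -> Y -> R) (ns : 'I_m -> nat) :
  is_distribution Pr ->
  is_policy pibar ->
  (forall i, is_policy (pis i)) ->
  (forall i, has_support delta (pis i) pibar) ->
  Var (ns := ns) Pr pis (U_bal delta pis pibar) <=
  Var (ns := ns) Pr pis (U_naive delta pis pibar).
Proof.
(* The bound holds for any weights [pibar], not only for a policy. *)
move=> Pr_distr _ pis_policy pis_support.
rewrite (eq_Var Pr pis (U_balE pis delta pibar)).
rewrite (eq_Var Pr pis (U_naiveE pis delta pibar)).
rewrite (Var_sum_coord Pr_distr pis_policy _ (fun _ => bal_term ns pis delta pibar)).
rewrite Var_sum_coord // ler_wpM2l ?sqr_ge0 //.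
under eq_bigr do rewrite (VsampleE Pr_distr pis_policy).
under [X in _ <= X]eq_bigr do
  rewrite (VsampleE Pr_distr pis_policy) (Esample_naive_term Pr pis_support).
rewrite !sumrB sumr_const -mulr_natl.
apply: lerB; first exact: sum_second_moment_bal_le.
exact: card_utility_sqr_le.
Qed.
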